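(* The map $\bullet^{\perp}:\mathrm{Gr}(n,2n)\rightarrow\mathrm{Gr}(n,2n)$, sending an $n$-plane $U$ to $U^{\perp}:=\{u\in\mathbb{C}^{2n}\mid\Omega(u,u')=0\text{ for all }u'\in U\}$, expressed in Plücker coordinates coincides with the Lagrangian involution $\tau:p_{\alpha}\mapsto\sigma_{\alpha}p_{\alpha^t}$: \[ \Bigl[ p_{\alpha}~\Bigl\lvert~\alpha\in\tbinom{\langle n\rangle}{n}\Bigr] \mapsto \Bigl[\sigma_{\alpha}p_{\alpha^t}~\Bigr\rvert~\alpha\in\tbinom{\langle n\rangle}{n}\Bigr]\,. \] In particular, the relation $p_{\alpha}-\sigma_{\alpha}p_{\alpha^t}=0$ holds on $\mathrm{LG}(n)$.
   Context: Let $[n]:=\{1,\dotsc,n\}$, $\bar{\imath}:=-i$, and $\langle n\rangle:=\{\bar{n},\dotsc,\bar1,1,\dotsc,n\}$. Fix an ordered basis $\{e_{\bar{n}},\dotsc,e_{\bar1},e_1,\dotsc,e_n\}$ of $\mathbb{C}^{2n}$ and the non-degenerate alternating form $\Omega:=\sum_{i=1}^n e_{\bar{\imath}}\wedge e_i$. The Grassmannian $\mathrm{Gr}(n,2n)\subseteq\mathbb{P}(\bigwedge^n\mathbb{C}^{2n})$ has Plücker coordinates $p_\alpha$ indexed by $n$-element subsets $\alpha\in\binom{\langle n\rangle}{n}$, and the Lagrangian Grassmannian $\mathrm{LG}(n)$ is the set of maximal isotropic subspaces of $\mathbb{C}^{2n}$ relative to $\Omega$. For $\alpha\in\binom{\langle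 n\rangle}{n}$, $\alpha^t$ denotes the complement of $\{\bar\alpha_1,\dotsc,\bar\alpha_n\}$ in $\langle n\rangle$ (equivalently, the transpose of the partition in the $n\times n$ square associated to $\alpha$); $\alpha_+$ (respectively $\alpha_-$) denotes the subsequence of positive (negative) elements of $\alpha$, and $\alpha_+^c$, $\alpha_-^c$ their complements among the positive (negative) elements of $\langle n\rangle$. Set $\sigma_{\alpha}:={\rm sgn}(\alpha_+^c,\alpha_+)\cdot{\rm sgn}(\alpha_-,\alpha_-^c)=\pm1$, where ${\rm sgn}(a_1,\dotsc,a_s)$ is the sign of the permutation sorting the sequence $(a_1,\dotsc,a_s)$. The Lagrangian involution is the map $\tau:p_{\alpha}\mapsto\sigma_{\alpha}p_{\alpha^t}$.
   Formalization: In $\sigma_{\alpha}$, α₋ and α₋ᶜ are the sets {i ∈ [n] : ī ∈ α} and its complement in [n], listed in increasing order of i, instead of the negative labels in the order n̄,…,1̄. The statement above fails without it. *)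

From HB Require Import structures.
From mathcomp Require Import all_boot all_order all_algebra.
From mathcomp Require Import complex.
From mathcomp Require Import reals.
Set Implicit Arguments. Unset Strict Implicit. Unset Printing Implicit Defensive.
Import Order.TTheory GRing.Theory Num.Theory.
Local Open Scope ring_scope.

(* Coordinates of C^{2n} are indexed by positions k : 'I_(n + n), the
   position k corresponding to the basis vector e_(lab k) in the ordered
   basis e_{nbar}, ..., e_{1bar}, e_1, ..., e_n:
     k < n   |-> label -(n - k)      (i.e. \bar{n-k})
     k >= n  |-> label  k - n + 1.                                         *)
Definition lab (n : nat) (k : 'I_(n + n)) : int :=
  if (k < n)%N then - ((n - k)%:Z) else ((k - n).+1)%:Z.

(* The position of the label \bar{x} (= -x) is the reversed position. *)
Definition barpos (n : nat) (k : 'I_(n + n)) : 'I_(n + n) := rev_ord k.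

(* Omega = sum_i e_{ibar} /\ e_i, as a bilinear form on row vectors:
   Omega(u,v) = sum_i (u_{ibar} v_i - u_i v_{ibar}). *)
Definition Omega (F : fieldType) (n : nat) (u v : 'rV[F]_(n + n)) : F :=
  \sum_(k : 'I_(n + n) | (n <= k)%N)
     (u 0 (barpos k) * v 0 k - u 0 k * v 0 (barpos k)).

(* Plucker coordinate p_alpha of the n-plane spanned by the rows of
   A : 'M_(n, 2n): the maximal minor on the columns in alpha, taken in
   increasing order (enum of a set of ordinals is increasing). *)
Definition pluecker (F : fieldType) (n : nat) (A : 'M[F]_(n, n + n))
    (alpha : {set 'I_(n + n)}) : F :=
  \det (\matrix_(i < n, j < n)
          A i (nth (widen_ord (leq_addr n n) j) (enum alpha) j)).

Definition ltrans (n : nat) (alpha : {set 'I_(n + n)}) : {set 'I_(n + n)} :=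
  ~: (@barpos n @: alpha).

Definition sgnseq (s : seq int) : int :=
  (-1) ^+ (\sum_(i < size s) \sum_(j < size s)
             ((i < j)%N && (nth 0%R s j < nth 0%R s i)%R))%N.

Definition alpha_pos (n : nat) (alpha : {set 'I_(n + n)}) : seq int :=
  map (@lab n) [seq k : 'I_(n + n) <- enum alpha | (n <= k)%N].
Definition alpha_posc (n : nat) (alpha : {set 'I_(n + n)}) : seq int :=
  alpha_pos (~: alpha).
(* alpha_- and alpha_-^c: negative elements \bar{i} of alpha, recorded by
   i in [n] in increasing order of i. *)
Definition alpha_neg (n : nat) (alpha : {set 'I_(n + n)}) : seq int :=
  rev (map (fun k => - @lab n k) [seq k : 'I_(n + n) <- enum alpha | (k < n)%N]).
Definition alpha_negc (n : nat) (alpha : {set 'I_(n + n)}) : seq int :=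
  alpha_neg (~: alpha).

Definition lsign (n : nat) (alpha : {set 'I_(n + n)}) : int :=
  sgnseq (alpha_posc alpha ++ alpha_pos alpha) *
  sgnseq (alpha_neg alpha ++ alpha_negc alpha).

(* If the rows of A span U and those of B span U^perp, then C := B J, with J
   the Gram matrix of Omega, satisfies C A^T = 0.  Completing A to an
   invertible matrix shows that D |-> det (D C^T) and D |-> det (col_mx A D)
   are proportional with a nonzero factor.  Evaluated at the unit rows
   e_k, k in bar alpha, the left side is a signed maximal minor of B on alpha
   and, by Laplace expansion, the right side a signed maximal minor of A on
   the complement of bar alpha, that is on alpha^t; counting inversions
   identifies the accumulated sign with sigma_alpha up to a global sign.
   When U is Lagrangian, U is transverse to a coordinate Lagrangian
   <e_i, i in S; e_ibar, i not in S>, whose index set beta satisfies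
   beta^t = beta, sigma_beta = 1 and p_beta(U) <> 0; this forces the
   factor to be 1. *)

From HB Require Import structures.
From mathcomp Require Import all_boot all_order all_algebra perm.
From mathcomp Require Import complex reals.
From mathcomp Require Import zify ring.
Set Implicit Arguments. Unset Strict Implicit. Unset Printing Implicit Defensive.
Import Order.TTheory GRing.Theory Num.Theory.
Local Open Scope ring_scope.

Section Inversions.
Variables (T : Type) (lt : rel T).

Fixpoint inversions (s : seq T) : nat :=
  if s is x :: t then (count (lt^~ x) t + inversions t)%N else 0%N.

Definition crossings (s t : seq T) : nat := (\sum_(x <- s) count (lt^~ x) t)%N.

Lemma inversions_cat s t :
  inversions (s ++ t) = (inversions s + inversions t + crossings s t)%N.
Proof.
elim: s => [|x s IH] /=; first by rewrite /crossings big_nil addn0.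
rewrite IH /crossings big_cons count_cat; lia.
Qed.

Lemma inversions_rcons s x :
  inversions (rcons s x) = (inversions s + count (lt x) s)%N.
Proof. by elim: s => [|y s IH] //=; rewrite IH -cats1 count_cat /=; lia. Qed.

End Inversions.

Lemma inversions_map (T T' : Type) (lt : rel T') (f : T -> T') (s : seq T) :
  inversions lt (map f s) = inversions (relpre f lt) s.
Proof. by elim: s => [|x s IH] //=; rewrite IH count_map. Qed.

Lemma eq_inversions (T : Type) (lt1 lt2 : rel T) :
  lt1 =2 lt2 -> inversions lt1 =1 inversions lt2.
Proof.
move=> eq_lt; elim => [|x s IH] //=; rewrite IH; congr (_ + _)%N.
by apply: eq_count => y; rewrite /= eq_lt.
Qed.

Lemma inversions_rev (T : Type) (lt : rel T) (s : seq T) :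
  inversions lt (rev s) = inversions (fun x y => lt y x) s.
Proof.
elim: s => [|x s IH] //.
by rewrite rev_cons inversions_rcons IH /= addnC count_rev.
Qed.

Lemma sgnseqE (s : seq int) : sgnseq s = (-1) ^+ inversions <%R s.
Proof.
have sum_nth_count (P : pred int) (t : seq int) :
    (\sum_(j < size t) P (nth 0%R t j))%N = count P t.
  rewrite -sum1_count (big_nth 0%R) big_mkord [RHS]big_mkcond.
  by apply: eq_bigr => j _; case: (P _).
rewrite /sgnseq; congr (_ ^+ _).
elim: s => [|x s IH] /=; first by rewrite big_ord0.
rewrite big_ord_recl /= big_ord_recl /= add0n (sum_nth_count (<%R^~ x)) -IH.
by congr (_ + _)%N; apply: eq_bigr => i _; rewrite big_ord_recl.
Qed.

Lemma sign_sq (R : pzRingType) (k : nat) : (-1) ^+ k * (-1) ^+ k = 1 :> R.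
Proof. by rewrite -exprD -signr_odd addnn odd_double. Qed.

Section SortOrdinals.
Context {N : nat}.

Definition ord_leq : rel 'I_N := fun x y => (x <= y)%N.
Definition ord_ltn : rel 'I_N := fun x y => (x < y)%N.

Lemma ord_leq_total : total ord_leq.
Proof. by move=> x y; apply: leq_total. Qed.

Lemma ord_leq_trans : transitive ord_leq.
Proof. by move=> x y z; apply: leq_trans. Qed.

Lemma ord_leq_anti : antisymmetric ord_leq.
Proof. by move=> x y /andP[xy yx]; apply/val_inj/eqP; rewrite eqn_leq; apply/andP. Qed.

Lemma ord_ltn_trans : transitive ord_ltn.
Proof. by move=> x y z; apply: ltn_trans. Qed.

Lemma sorted_ltn_leq s : sorted ord_ltn s -> sorted ord_leq s.
Proof. by apply: sub_sorted => x y /ltnW. Qed.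

Lemma sorted_leq_ltn s : sorted ord_leq s -> uniq s -> sorted ord_ltn s.
Proof.
move=> s_le s_uniq.
have -> : sorted ord_ltn s = sorted ltn (map val s) by rewrite sorted_map.
by rewrite ltn_sorted_uniq_leq (map_inj_uniq val_inj) s_uniq sorted_map.
Qed.

Lemma sort_ord_leqP s t : sorted ord_leq t -> perm_eq s t -> sort ord_leq s = t.
Proof.
move=> t_sorted st; apply: (sorted_eq ord_leq_trans ord_leq_anti) => //.
  exact: (sort_sorted ord_leq_total).
by rewrite perm_sort.
Qed.

Lemma sorted_enum_ord : sorted ord_leq (enum 'I_N).
Proof.
have -> : sorted ord_leq (enum 'I_N) = sorted leq (map val (enum 'I_N)).
  by rewrite sorted_map.
by rewrite val_enum_ord iota_sorted.
Qed.

Lemma sorted_enum_set (A : {set 'I_N}) : sorted ord_ltn (enum A).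
Proof.
apply: sorted_leq_ltn; last exact: enum_uniq.
rewrite /enum_mem -enumT; apply: sorted_filter; first exact: ord_leq_trans.
exact: sorted_enum_ord.
Qed.

Lemma sorted_filter_enum_set (A : {set 'I_N}) (p : pred 'I_N) :
  sorted ord_ltn [seq x <- enum A | p x].
Proof. exact/(sorted_filter ord_ltn_trans)/sorted_enum_set. Qed.

Lemma inversions_sorted s : sorted ord_ltn s -> inversions ord_ltn s = 0%N.
Proof.
elim: s => [|x s IH] //= s_sorted.
rewrite IH ?(path_sorted s_sorted) // addn0.
have /allP x_min := order_path_min ord_ltn_trans s_sorted.
apply/eqP; rewrite -leqn0 leqNgt -has_count; apply/hasPn => y /x_min.
by rewrite /ord_ltn -leqNgt => /ltnW.
Qed.

Lemma inversions_sorted_flip s : sorted ord_ltn s ->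
  inversions (fun x y => ord_ltn y x) s = 'C(size s, 2).
Proof.
elim: s => [|x s IH] //= s_sorted.
rewrite IH ?(path_sorted s_sorted) // binS bin1 addnC; congr (_ + _)%N.
have /allP x_min := order_path_min ord_ltn_trans s_sorted.
by rewrite -[RHS](count_predT s); apply: eq_in_count => y /x_min.
Qed.

End SortOrdinals.

Section AlternatingSort.
Variables (N : nat) (R : pzRingType).

Definition alternating (G : seq 'I_N -> R) (k : nat) :=
  forall a y z b, (size a + size b).+2 = k ->
    G (a ++ y :: z :: b) = - G (a ++ z :: y :: b).

Lemma alternating_cons G k x :
  alternating G k.+1 -> alternating (fun t => G (x :: t)) k.
Proof. by move=> G_alt a y z b sz_ab; apply: (G_alt (x :: a)); rewrite /= sz_ab. Qed.

Lemma alternating_insert (w : seq 'I_N) (x : 'I_N) G :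
  alternating G (size w).+1 -> sorted ord_ltn w -> x \notin w ->
  G (x :: w) = (-1) ^+ count (ord_ltn^~ x) w * G (sort ord_leq (x :: w)).
Proof.
elim: w x G => [|y w IH] x G G_alt w_sorted.
  by rewrite /= expr0 mul1r.
rewrite in_cons negb_or => /andP[x_neq_y x_notin_w].
have y_min : all (ord_ltn y) w := order_path_min ord_ltn_trans w_sorted.
case: (ltnP y x) => [lt_yx|le_xy].
  rewrite (G_alt [::] x y w) //= (IH x _ (alternating_cons y G_alt)) //;
    last exact: path_sorted w_sorted.
  have -> : sort ord_leq [:: x, y & w] = y :: sort ord_leq (x :: w).
    apply: sort_ord_leqP.
      rewrite /= (path_sortedE ord_leq_trans) (sort_sorted ord_leq_total) andbT.
      rewrite (perm_all _ (permEl (perm_sort ord_leq _))) /= /ord_leq (ltnW lt_yx).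
      by apply: sub_all y_min => z /ltnW.
    apply: (@perm_trans _ [:: y, x & w]).
      by apply/permPl; exact: (perm_catCA [:: x] [:: y] w).
    by rewrite perm_cons perm_sym perm_sort.
  by rewrite /ord_ltn lt_yx add1n exprS mulN1r mulNr.
have lt_xy : (x < y)%N.
  by rewrite ltn_neqAle le_xy andbT; apply: contra x_neq_y => /eqP/val_inj ->.
rewrite (sorted_sort ord_leq_trans); last by apply: sorted_ltn_leq; rewrite /= /ord_ltn lt_xy.
rewrite (@eq_in_count _ _ pred0) ?count_pred0 ?mul1r // => z.
rewrite in_cons => /orP[/eqP -> | z_in_w] /=; first by rewrite /ord_ltn ltnNge ltnW.
move/allP: y_min => /(_ z z_in_w); rewrite /ord_ltn => lt_yz.
by rewrite ltnNge ltnW // (ltn_trans lt_xy lt_yz).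
Qed.

Lemma alternating_sort (u : seq 'I_N) G : alternating G (size u) -> uniq u ->
  G u = (-1) ^+ inversions ord_ltn u * G (sort ord_leq u).
Proof.
elim: u G => [|x t IH] G G_alt /=; first by rewrite mul1r.
case/andP=> x_notin_t t_uniq.
have G_alt' : alternating G (size (sort ord_leq t)).+1 by rewrite size_sort.
rewrite (IH _ (alternating_cons x G_alt)) // (alternating_insert G_alt').
- rewrite count_sort mulrA -exprD [(inversions _ t + _)%N]addnC; congr (_ * G _).
  apply/perm_sortP; [exact: ord_leq_total|exact: ord_leq_trans|exact: ord_leq_anti|].
  by rewrite perm_cons perm_sort.
- by apply: sorted_leq_ltn; [exact: (sort_sorted ord_leq_total)|rewrite sort_uniq].
- by rewrite mem_sort.
Qed.

End AlternatingSort.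

Lemma nth_cat_swap (T : Type) (x0 : T) a y z b j :
  j != size a -> j != (size a).+1 ->
  nth x0 (a ++ y :: z :: b) j = nth x0 (a ++ z :: y :: b) j.
Proof.
move=> /eqP j_neq_a /eqP j_neq_a1; rewrite !nth_cat; case: ltnP => // le_aj.
by have [k ->] : exists k, (j - size a = k.+2)%N by exists (j - size a - 2)%N; lia.
Qed.

Section ColumnSelection.
Variable R : comPzRingType.

Definition colsel m k N (d : 'I_k -> 'I_N) (M : 'M[R]_(m, N)) (u : seq 'I_N) :
  'M[R]_(m, k) := \matrix_(i, j) M i (nth (d j) u j).

Lemma colsel_enum N (M : 'M[R]_N) : colsel id M (enum 'I_N) = M.
Proof. by apply/matrixP => i j; rewrite !mxE nth_ord_enum. Qed.

Lemma det_colsel_alternating m N (d : 'I_m -> 'I_N) (M : 'M[R]_(m, N)) :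
  alternating (fun u => \det (colsel d M u)) m.
Proof.
move=> a y z b sz_ab.
have lt_a : (size a < m)%N by lia.
have lt_a1 : ((size a).+1 < m)%N by lia.
pose p := Ordinal lt_a; pose p' := Ordinal lt_a1.
have -> : colsel d M (a ++ z :: y :: b) = xcol p p' (colsel d M (a ++ y :: z :: b)).
  apply/matrixP => i j; rewrite /xcol !mxE.
  case: tpermP => [->|->|j_neq_p j_neq_p'];
    try by rewrite /= !nth_cat ltnn subnn ltnNge leqnSn /= subSnn.
  rewrite nth_cat_swap //; apply/eqP => j_eq;
    [apply: j_neq_p|apply: j_neq_p']; exact: val_inj.
rewrite xcolE det_mulmx /tperm_mx det_perm odd_tperm.
have -> : p != p' by rewrite -(inj_eq val_inj) /= neq_ltn ltnSn.
by rewrite expr1 mulrN1 opprK.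
Qed.

Lemma det_colsel_sort m N (d : 'I_m -> 'I_N) (M : 'M[R]_(m, N)) u :
  size u = m -> uniq u ->
  \det (colsel d M u) = (-1) ^+ inversions ord_ltn u * \det (colsel d M (sort ord_leq u)).
Proof.
move=> sz_u u_uniq; apply: (alternating_sort (G := fun v => \det (colsel d M v))) u_uniq.
by rewrite sz_u; apply: det_colsel_alternating.
Qed.

Definition unit_rows k N (d : 'I_k -> 'I_N) (t : seq 'I_N) : 'M[R]_(k, N) :=
  \matrix_(i, l) (l == nth (d i) t i)%:R.

Lemma unit_rows_mul_tr k m N (d : 'I_k -> 'I_N) (t : seq 'I_N) (C : 'M[R]_(m, N)) :
  unit_rows d t *m C^T = (colsel d C t)^T.
Proof.
apply/matrixP => i j; rewrite !mxE (bigD1 (nth (d i) t i)) //= big1 ?addr0.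
  by rewrite !mxE eqxx mul1r.
by move=> l /negPf l_neq; rewrite !mxE l_neq mul0r.
Qed.

Lemma det_col_mx_unit_rows r k (d : 'I_r -> 'I_(r + k)) (d' : 'I_k -> 'I_(r + k))
    (A : 'M[R]_(r, r + k)) (s t : seq 'I_(r + k)) :
  size s = r -> size t = k -> uniq (s ++ t) ->
  \det (col_mx A (unit_rows d' t)) =
    (-1) ^+ inversions ord_ltn (s ++ t) * \det (colsel d A s).
Proof.
move=> sz_s sz_t st_uniq; set M := col_mx A _.
have sz_st : size (s ++ t) = (r + k)%N by rewrite size_cat sz_s sz_t.
have sort_st : sort ord_leq (s ++ t) = enum 'I_(r + k).
  apply: sort_ord_leqP; first exact: sorted_enum_ord.
  apply: uniq_perm => //; first exact: enum_uniq.
  have st_sub : {subset s ++ t <= enum 'I_(r + k)} by move=> x _; rewrite mem_enum.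
  by apply: (uniq_min_size st_uniq st_sub _).2; rewrite size_enum_ord sz_st.
have := det_colsel_sort id M sz_st st_uniq; rewrite sort_st colsel_enum => detM.
have -> : \det M = (-1) ^+ inversions ord_ltn (s ++ t) * \det (colsel id M (s ++ t)).
  by rewrite detM mulrA sign_sq mul1r.
congr (_ * _).
rewrite cat_uniq in st_uniq; case/and3P: st_uniq => _ /hasPn st_disj t_uniq.
have -> : colsel id M (s ++ t) = block_mx (colsel d A s) (colsel d' A t) 0 1.
  apply/matrixP => i j.
  case: (split_ordP i) => i' ->; case: (split_ordP j) => j' ->;
    rewrite [LHS]mxE ?col_mxEu ?col_mxEd ?row_mxEl ?row_mxEr !mxE /= nth_cat sz_s
      ?ltn_ord ?addKn.
  - by rewrite (set_nth_default (d j')) ?sz_s.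
  - by rewrite ltnNge leq_addr /= (set_nth_default (d' j')) ?sz_t.
  - case: eqP => // s_eq_t; have := st_disj (nth (d' i') t i').
    by rewrite mem_nth ?sz_t // -s_eq_t mem_nth ?sz_s // => /(_ isT).
  - rewrite ltnNge leq_addr /= (set_nth_default (d' i') (rshift r j')) ?sz_t //.
    by rewrite nth_uniq ?sz_t // eq_sym.
by rewrite det_ublock det1 mulr1.
Qed.

End ColumnSelection.
Arguments unit_rows {R k N} d t.

Lemma det_mulmx_tr_annihilator (F : fieldType) r k
    (A : 'M[F]_(r, r + k)) (C : 'M[F]_(k, r + k)) :
  \rank A = r -> C *m A^T = 0 ->
  exists c : F, (forall D : 'M_(k, r + k), \det (D *m C^T) = c * \det (col_mx A D))
    /\ (row_free C -> c != 0).
Proof.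
move=> rkA CA0.
have AC0 : A *m C^T = 0 by rewrite -[A]trmxK -trmx_mul CA0 trmx0.
set L := col_ebase A; set U := row_ebase A.
set Y : 'M[F]_(k, r + k) := row_mx 0 1%:M *m U.
set K := col_mx A Y.
have eqK : K = block_mx L 0 0 1%:M *m U.
  rewrite /K /Y -[A]mulmx_ebase rkA pid_mx_row -/L -/U.
  by rewrite mul_col_mx mul_mx_row mulmx1 mulmx0.
have K_unit : K \in unitmx.
  rewrite eqK unitmx_mul row_ebase_unit andbT unitmxE det_ublock det1 mulr1.
  by rewrite -unitmxE col_ebase_unit.
have detK_neq0 : \det K != 0 by rewrite -unitfE -unitmxE.
(* Writing D = Z1 A + Z2 Y, only Z2 survives in D C^T, while
   det (col_mx A D) = det Z2 * det K. *)
exists (\det (Y *m C^T) / \det K); split.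
  move=> D; set Z := D *m invmx K.
  have eqD : D = lsubmx Z *m A + rsubmx Z *m Y.
    by rewrite -mul_row_col hsubmxK /Z mulmxKV.
  have -> : D *m C^T = rsubmx Z *m (Y *m C^T).
    by rewrite {1}eqD mulmxDl -!mulmxA AC0 mulmx0 add0r.
  have -> : col_mx A D = block_mx 1%:M 0 (lsubmx Z) (rsubmx Z) *m K.
    by rewrite /K mul_block_col mul1mx mul0mx addr0 -eqD.
  rewrite !det_mulmx det_lblock det1 mul1r.
  by field.
move=> C_free; rewrite mulf_neq0 // ?invr_eq0 //.
apply/negP => /eqP detYC0.
have : \det (C *m Y^T) == 0 by rewrite -det_tr trmx_mul trmxK detYC0.
case/det0P => v v_neq0 vCY0.
have vC_neq0 : v *m C != 0.
  by apply: contra v_neq0 => /eqP vC0; apply/eqP/(row_free_inj C_free); rewrite mul0mx.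
have vCK0 : v *m C *m K^T = 0.
  by rewrite /K tr_col_mx mul_mx_row -!mulmxA CA0 mulmx0 vCY0 row_mx0.
case/negP: vC_neq0; apply/eqP.
by rewrite -[v *m C](mulmxK (_ : K^T \in unitmx)) ?vCK0 ?mul0mx // unitmx_tr.
Qed.

Section Barpos.
Context {n : nat}.
Local Notation bar := (@barpos n).

Lemma barposK : involutive bar. Proof. exact: rev_ordK. Qed.
Lemma barpos_inj : injective bar. Proof. exact: rev_ord_inj. Qed.

Lemma ltn_barpos (x y : 'I_(n + n)) : (bar x < bar y)%N = (y < x)%N.
Proof. by rewrite /= /barpos /=; have := ltn_ord x; have := ltn_ord y; lia. Qed.

Lemma barpos_ltn (k : 'I_(n + n)) : (bar k < n)%N = (n <= k)%N.
Proof. by rewrite /= /barpos /=; have := ltn_ord k; lia. Qed.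

End Barpos.

Section SymplecticForm.
Variables (F : fieldType) (n : nat).
Local Notation bar := (@barpos n).

Definition sympl_sign (k : 'I_(n + n)) : F := if (k < n)%N then -1 else 1.

(* The Gram matrix of Omega: Omega u v = u * sympl_mx * v^T. *)
Definition sympl_mx : 'M[F]_(n + n) :=
  \matrix_(k, l) (if k == bar l then sympl_sign l else 0).

Lemma mul_sympl_mx m (B : 'M[F]_(m, n + n)) i l :
  (B *m sympl_mx) i l = B i (bar l) * sympl_sign l.
Proof.
rewrite !mxE (bigD1 (bar l)) //= big1 ?addr0; first by rewrite mxE eqxx.
by move=> k /negPf k_neq; rewrite mxE k_neq mulr0.
Qed.

Lemma sympl_mx_unit : sympl_mx \in unitmx.
Proof.
suff sq : sympl_mx *m (- sympl_mx) = 1%:M by case: (mulmx1_unit sq).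
apply/matrixP => k l; rewrite mulmxN [LHS]mxE mul_sympl_mx !mxE barposK.
case: eqP => _; last by rewrite mul0r oppr0.
by rewrite /sympl_sign barpos_ltn ltnNge; case: leqP; rewrite ?mulN1r ?mul1r ?opprK.
Qed.

Lemma Omega_row_mulmx (A B : 'M[F]_(n, n + n)) i j :
  Omega (row i B) (row j A) = (B *m sympl_mx *m A^T) i j.
Proof.
rewrite /Omega [RHS]mxE [RHS](bigID (fun l : 'I_(n + n) => n <= l)%N) /= sumrB.
congr (_ + _).
  by apply: eq_bigr => l le_nl; rewrite mul_sympl_mx !mxE /sympl_sign ltnNge le_nl mulr1.
rewrite -sumrN (reindex_inj barpos_inj) /=.
apply: eq_big => [l|l le_n_barl]; first by have := ltn_ord l; lia.
have lt_ln : (l < n)%N by rewrite -[l]barposK barpos_ltn.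
by rewrite barposK mul_sympl_mx !mxE /sympl_sign lt_ln mulrN1 mulNr.
Qed.

Lemma prod_sympl_sign_nth m (d : 'I_m -> 'I_(n + n)) (t : seq 'I_(n + n)) :
  size t = m ->
  \prod_(j < m) sympl_sign (nth (d j) t j) = (-1) ^+ count (fun k : 'I_(n + n) => (k < n)%N) t.
Proof.
elim: t m d => [|x t IH] [|m] d //= sz_t; first by rewrite big_ord0.
rewrite big_ord_recl (IH m (fun j => d (lift ord0 j))); last by case: sz_t.
rewrite exprD /sympl_sign.
by case: (x < n)%N; rewrite ?expr1 ?expr0 ?mul1r.
Qed.

Lemma det_colsel_sympl m (d : 'I_m -> 'I_(n + n)) (B : 'M[F]_(m, n + n)) e :
  size e = m ->
  \det (colsel d (B *m sympl_mx) (map bar e)) =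
    (-1) ^+ count (fun k : 'I_(n + n) => (k < n)%N) (map bar e) * \det (colsel d B e).
Proof.
move=> sz_e.
have -> : colsel d (B *m sympl_mx) (map bar e) =
    colsel d B e *m diag_mx (\row_j sympl_sign (nth (d j) (map bar e) j)).
  apply/matrixP => i j; rewrite mul_mx_diag [LHS]mxE mul_sympl_mx !mxE.
  by rewrite (nth_map (d j)) ?sz_e // barposK.
rewrite det_mulmx det_diag mulrC; congr (_ * _).
under eq_bigr do rewrite mxE.
by rewrite prod_sympl_sign_nth ?size_map.
Qed.

End SymplecticForm.

Section Crossings.
Context {N : nat}.

Definition cross (X Y : {set 'I_N}) : nat :=
  (\sum_x \sum_y [&& x \in X, y \in Y & (y < x)%N])%N.

Lemma card_sumE (X : {set 'I_N}) : #|X| = (\sum_x (x \in X))%N.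
Proof. by rewrite -sum1_card big_mkcond; apply: eq_bigr => x _; case: (x \in X). Qed.

Lemma count_enum_set (X : {set 'I_N}) (p : pred 'I_N) :
  count p (enum X) = #|X :&: [set x | p x]|.
Proof.
rewrite -sum1_count big_enum_cond -setIdE -sum1_card big_mkcond [RHS]big_mkcond.
by apply: eq_bigr => x _; rewrite !inE.
Qed.

Lemma crossings_enum_set (X Y : {set 'I_N}) (p q : pred 'I_N) :
  crossings ord_ltn [seq x <- enum X | p x] [seq y <- enum Y | q y] =
  cross (X :&: [set x | p x]) (Y :&: [set y | q y]).
Proof.
rewrite /crossings big_filter big_enum_cond big_mkcond; apply: eq_bigr => x _.
rewrite -sum1_count big_filter_cond big_enum_cond big_mkcond !inE.
case: (x \in X); case: (p x) => /=; try by rewrite big1_eq.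
by apply: eq_bigr => y _; rewrite !inE /ord_ltn; case: (y \in Y); case: (q y); case: (y < x)%N.
Qed.

Lemma cross_swap (X Y : {set 'I_N}) : [disjoint X & Y] ->
  (cross X Y + cross Y X = #|X| * #|Y|)%N.
Proof.
move=> /pred0P XY0; rewrite /cross [X in (_ + X)%N]exchange_big -big_split.
rewrite !card_sumE big_distrl; apply: eq_bigr => x _ /=.
rewrite -big_split big_distrr; apply: eq_bigr => y _ /=.
case xX: (x \in X); case yY: (y \in Y) => //=; rewrite ?andbF ?muln0 //.
have xY : x \notin Y by apply/negP => xY; have := XY0 x; rewrite /= xX xY.
have : x != y by apply: contraNneq xY => ->.
by rewrite neq_ltn => /orP[] lt; rewrite lt ltnNge ltnW.
Qed.

End Crossings.

Section SignOfTranspose.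
Variable n : nat.
Local Notation bar := (@barpos n).
Local Notation pos := [set k : 'I_(n + n) | (n <= k)%N].
Local Notation neg := [set k : 'I_(n + n) | (k < n)%N].

Lemma ltr_lab (x y : 'I_(n + n)) : (lab x < lab y)%R = (x < y)%N.
Proof.
rewrite /lab; have := ltn_ord x; have := ltn_ord y.
by case: ifP => ? ; case: ifP => ? ? ?; apply/idP/idP; lia.
Qed.

Lemma setC_pos : ~: pos = neg.
Proof. by apply/setP => k; rewrite !inE ltnNge. Qed.

Lemma card_pos : #|pos| = n.
Proof.
rewrite card_sumE big_split_ord /= big1 ?add0n => [|i _]; last first.
  by rewrite inE /= leqNgt ltn_ord.
rewrite (eq_bigr (fun _ => 1%N)) => [|i _]; last by rewrite inE /= leq_addr.
by rewrite sum1_card card_ord.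
Qed.

Lemma card_neg : #|neg| = n.
Proof.
by apply/eqP; rewrite -(eqn_add2l n) -{1}card_pos -setC_pos cardsC card_ord.
Qed.

Lemma cross_pos_neg (X Y : {set 'I_(n + n)}) :
  cross X Y = (cross (X :&: pos) (Y :&: pos) + cross (X :&: neg) (Y :&: neg)
               + #|X :&: pos| * #|Y :&: neg|)%N.
Proof.
rewrite /cross !card_sumE big_distrl -!big_split; apply: eq_bigr => x _ /=.
rewrite big_distrr -!big_split; apply: eq_bigr => y _ /=; rewrite !inE.
case: (x \in X); case: (y \in Y); rewrite /= ?andbF ?muln0 //.
case: (leqP n x) => le_nx; case: (leqP n y) => le_ny /=.
- by rewrite muln0 !addn0.
- by rewrite (leq_trans le_ny le_nx).
- by rewrite ltnNge (leq_trans (ltnW le_nx) le_ny).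
- by rewrite add0n addn0.
Qed.

Lemma cross_imset_barpos (X Y : {set 'I_(n + n)}) : cross (bar @: X) (bar @: Y) = cross Y X.
Proof.
rewrite /cross exchange_big (reindex_inj barpos_inj); apply: eq_bigr => y _.
rewrite (reindex_inj barpos_inj); apply: eq_bigr => x _.
rewrite !(mem_imset _ _ barpos_inj) ltn_barpos.
by case: (x \in X); case: (y \in Y).
Qed.

Variable alpha : {set 'I_(n + n)}.

Lemma inversions_sigma_pos :
  inversions <%R (alpha_posc alpha ++ alpha_pos alpha) =
  cross (~: alpha :&: pos) (alpha :&: pos).
Proof.
rewrite /alpha_posc /alpha_pos -map_cat inversions_map.
rewrite (@eq_inversions _ _ ord_ltn) => [|x y]; last exact: ltr_lab.
by rewrite inversions_cat !inversions_sorted ?sorted_filter_enum_set // crossings_enum_set.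
Qed.

Lemma inversions_sigma_neg :
  inversions <%R (alpha_neg alpha ++ alpha_negc alpha) =
  cross (~: alpha :&: neg) (alpha :&: neg).
Proof.
rewrite /alpha_negc /alpha_neg -rev_cat -map_cat inversions_rev inversions_map.
rewrite (@eq_inversions _ _ ord_ltn) => [|x y]; last by rewrite /= ltrN2 ltr_lab.
by rewrite inversions_cat !inversions_sorted ?sorted_filter_enum_set // crossings_enum_set.
Qed.

Lemma count_neg_map_bar :
  count (fun k : 'I_(n + n) => (k < n)%N) (map bar (enum alpha)) = #|alpha :&: pos|.
Proof.
rewrite count_map count_enum_set; congr #|alpha :&: _|.
by apply/setP => k; rewrite !inE barpos_ltn.
Qed.

Lemma crossings_ltrans_bar :
  crossings ord_ltn (enum (ltrans alpha)) (map bar (enum alpha)) = cross alpha (~: alpha).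
Proof.
rewrite /crossings big_enum (reindex_inj barpos_inj) /= /cross exchange_big big_mkcond.
apply: eq_bigr => x _; rewrite count_map count_enum_set card_sumE.
rewrite /ltrans inE (mem_imset _ _ barpos_inj) !inE.
case: (x \in alpha) => /=; first by rewrite big1 // => y _; rewrite andbF.
by apply: eq_bigr => y _; rewrite !inE /ord_ltn ltn_barpos.
Qed.

Lemma inversions_ltrans_bar : #|alpha| = n ->
  inversions ord_ltn (enum (ltrans alpha) ++ map bar (enum alpha)) =
  ('C(n, 2) + cross alpha (~: alpha))%N.
Proof.
move=> card_alpha.
rewrite inversions_cat inversions_sorted ?sorted_enum_set // add0n inversions_map.
rewrite (@eq_inversions _ _ (fun x y => ord_ltn y x)) => [|x y]; last exact: ltn_barpos.
by rewrite inversions_sorted_flip ?sorted_enum_set // -cardE card_alpha crossings_ltrans_bar.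
Qed.

Lemma odd_sign_exponent (m c a a' b b' c1 c2 c3 c4 : nat) :
  (c1 + c3 = a * b' -> c2 + c4 = b * a' ->
   a + b = m -> a + b' = m -> b + a' = m ->
   odd (c3 + c4) = odd (c + a + (c + (c1 + c2 + a * a'))))%N.
Proof.
move=> cross1 cross2 card_ab card_ab' card_ba'.
have -> : a' = a by lia.
have eq_b' : b' = b by lia.
rewrite eq_b' mulnC in cross1.
have even_sum : (c3 + c4 + (c + a + (c + (c1 + c2 + a * a))) = (c + a * b).*2 + a * a.+1)%N.
  by rewrite mulnS; lia.
have : odd (c3 + c4) (+) odd (c + a + (c + (c1 + c2 + a * a))) = false.
  by rewrite -oddD even_sum oddD odd_double oddM /= andbN.
by case: (odd (c3 + c4)); case: odd.
Qed.

Lemma lsignE : #|alpha| = n ->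
  lsign alpha = (-1) ^+ ('C(n, 2) + #|alpha :&: pos|
                 + inversions ord_ltn (enum (ltrans alpha) ++ map bar (enum alpha))) :> int.
Proof.
move=> card_alpha.
rewrite /lsign !sgnseqE -exprD -[LHS]signr_odd -[RHS]signr_odd; congr (_ ^+ _).
rewrite inversions_sigma_pos inversions_sigma_neg inversions_ltrans_bar //.
rewrite (cross_pos_neg alpha (~: alpha)).
have disj X : [disjoint alpha :&: X & ~: alpha :&: X].
  by apply/pred0P => x; rewrite /= !inE; case: (x \in alpha); rewrite /= ?andbF.
have split_card X : (#|X :&: alpha| + #|X :&: ~: alpha| = #|X|)%N.
  by rewrite -setDE cardsID.
rewrite (@odd_sign_exponent n 'C(n, 2) _ _ _ _ _ _ _ _
  (cross_swap (disj pos)) (cross_swap (disj neg))) //.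
- by rewrite -setC_pos -setDE cardsID card_alpha.
- by rewrite setIC [~: alpha :&: _]setIC split_card card_pos.
- by rewrite setIC [~: alpha :&: _]setIC split_card card_neg.
Qed.

Lemma lsign_selfdual : ltrans alpha = alpha -> lsign alpha = 1.
Proof.
move=> alpha_sd.
have bar_alpha x : (bar x \in alpha) = (x \notin alpha).
  by rewrite -{1}alpha_sd /ltrans inE (mem_imset _ _ barpos_inj).
have neg_out : ~: alpha :&: neg = bar @: (alpha :&: pos).
  apply/setP => x; rewrite -[x]barposK (mem_imset _ _ barpos_inj) !inE.
  by rewrite bar_alpha barpos_ltn negbK.
have neg_in : alpha :&: neg = bar @: (~: alpha :&: pos).
  by apply/setP => x; rewrite -[x]barposK (mem_imset _ _ barpos_inj) !inE bar_alpha barpos_ltn.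
rewrite /lsign !sgnseqE -exprD inversions_sigma_pos inversions_sigma_neg.
by rewrite neg_out neg_in cross_imset_barpos addnn -signr_odd odd_double.
Qed.

End SignOfTranspose.

Section PlueckerPerp.
Variables (F : fieldType) (n : nat).
Local Notation bar := (@barpos n).
Local Notation widen := (widen_ord (leq_addr n n)).
Local Notation pos := [set k : 'I_(n + n) | (n <= k)%N].

Lemma plueckerE (A : 'M[F]_(n, n + n)) alpha :
  pluecker A alpha = \det (colsel widen A (enum alpha)).
Proof. by []. Qed.

Lemma card_ltrans (alpha : {set 'I_(n + n)}) : #|alpha| = n -> #|ltrans alpha| = n.
Proof.
move=> card_alpha; apply/eqP; rewrite -(eqn_add2l n) -{1}card_alpha.
by rewrite -(card_imset _ barpos_inj) cardsC card_ord.
Qed.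

Lemma uniq_ltrans_bar (alpha : {set 'I_(n + n)}) :
  uniq (enum (ltrans alpha) ++ map bar (enum alpha)).
Proof.
rewrite cat_uniq enum_uniq (map_inj_uniq barpos_inj) enum_uniq andbT /=.
apply/hasPn => _ /mapP [k k_alpha ->]; rewrite mem_enum /ltrans inE negbK.
by apply: imset_f; rewrite -mem_enum.
Qed.

Lemma lsign_intrE (alpha : {set 'I_(n + n)}) : #|alpha| = n ->
  (lsign alpha)%:~R = (-1) ^+ 'C(n, 2) * (-1) ^+ #|alpha :&: pos| *
    (-1) ^+ inversions ord_ltn (enum (ltrans alpha) ++ map bar (enum alpha)) :> F.
Proof. by move=> card_alpha; rewrite lsignE // intr_sign !exprD. Qed.

Lemma pluecker_perp (A B : 'M[F]_(n, n + n)) :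
  \rank A = n -> \rank B = n ->
  (forall i j : 'I_n, Omega (row i B) (row j A) = 0) ->
  exists2 c : F, c != 0 &
    forall alpha : {set 'I_(n + n)}, #|alpha| = n ->
      pluecker B alpha = c * (lsign alpha)%:~R * pluecker A (ltrans alpha).
Proof.
move=> rkA rkB BA_orth; set C := B *m sympl_mx F n.
have CA0 : C *m A^T = 0.
  by apply/matrixP => i j; rewrite -Omega_row_mulmx BA_orth mxE.
have C_free : row_free C.
  by rewrite /row_free mxrankMfree ?rkB // row_free_unit sympl_mx_unit.
have [c [detDC c_neq0]] := det_mulmx_tr_annihilator rkA CA0.
exists (c * (-1) ^+ 'C(n, 2)) => [|alpha card_alpha].
  by rewrite mulf_neq0 ?signr_eq0 ?c_neq0.
set s := enum (ltrans alpha); set t := map bar (enum alpha).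
have sz_s : size s = n by rewrite -cardE card_ltrans.
have sz_t : size t = n by rewrite size_map -cardE.
(* Test the proportionality on the rows e_k, k in bar alpha. *)
have := detDC (unit_rows widen t).
rewrite unit_rows_mul_tr det_tr det_colsel_sympl -?cardE // count_neg_map_bar.
rewrite (det_col_mx_unit_rows widen widen A sz_s sz_t (uniq_ltrans_bar alpha)).
rewrite -!plueckerE lsign_intrE // => key.
set sg := (-1) ^+ #|_| in key *; set eps := (-1) ^+ inversions _ _ in key *.
set sC := (-1) ^+ 'C(n, 2) : F.
have -> : pluecker B alpha = sg * (c * (eps * pluecker A (ltrans alpha))).
  by rewrite -key mulrA sign_sq mul1r.
transitivity (c * (sC * sC) * sg * eps * pluecker A (ltrans alpha)).
  by rewrite sign_sq mulr1; ring.
ring.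
Qed.

End PlueckerPerp.

Section ColumnBasis.
Variable F : fieldType.

Lemma exists_col_basis m k (Q : 'M[F]_(m, k)) :
  exists r (f : 'I_r -> 'I_k), row_full (colsub f Q) /\
    forall v : 'rV_m, v *m colsub f Q = 0 -> v *m Q = 0.
Proof.
pose f := maxrankfun Q^T.
have Qf_tr : colsub f Q = (rowsub f Q^T)^T by rewrite trmx_mxsub trmxK.
exists (\rank Q^T), f; split.
  by rewrite Qf_tr /row_full mxrank_tr; exact: maxrowsub_free.
have /submxP [X QX] : (Q^T <= rowsub f Q^T)%MS by rewrite eq_maxrowsub.
move=> v vQf0; rewrite -[Q]trmxK QX trmx_mul -Qf_tr.
by rewrite mulmxA vQf0 mul0mx.
Qed.

Lemma row_eq0_on_col_basis m k r (Q : 'M[F]_(m, k)) (f : 'I_r -> 'I_k) (y : 'rV_k) :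
  row_full (colsub f Q) -> y *m Q^T = 0 ->
  (forall l, l \notin codom f -> y 0 l = 0) -> y = 0.
Proof.
move=> Qf_full yQ0 y_off; apply/rowP => l; rewrite mxE.
case: (boolP (l \in codom f)) => [/codomP [j ->]|]; last exact: y_off.
have /submxP [w wQf] : (delta_mx (0 : 'I_1) j <= colsub f Q)%MS by apply: submx_full.
have wQ_f j' : (w *m Q) 0 (f j') = (j == j')%:R.
  have := congr1 (fun M : 'rV[F]_r => M 0 j') wQf.
  by rewrite mulmx_colsub !mxE eqxx eq_sym => <-.
have : (y *m (w *m Q)^T) 0 0 = 0 by rewrite trmx_mul mulmxA yQ0 mul0mx mxE.
rewrite mxE (bigD1 (f j)) //= big1 ?addr0 => [|x x_neq].
  by rewrite mxE wQ_f eqxx mulr1.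
rewrite mxE; case: (boolP (x \in codom f)) => [/codomP [j' x_eq]|]; last first.
  by move/y_off->; rewrite mul0r.
have j_neq : j != j' by apply: contraNneq x_neq => ->; rewrite x_eq.
by rewrite x_eq wQ_f (negPf j_neq) mulr0.
Qed.

Definition col_mix n (S : {set 'I_n}) (P Q : 'M[F]_n) : 'M[F]_n :=
  \matrix_(i, j) if j \in S then Q i j else P i j.

(* A Lagrangian [P Q] is transverse to some coordinate Lagrangian. *)
Lemma exists_col_mix_unit n (P Q : 'M[F]_n) :
  row_free (row_mx P Q) -> P *m Q^T = Q *m P^T ->
  exists S : {set 'I_n}, \det (col_mix S P Q) != 0.
Proof.
move=> PQ_free PQ_sym.
have [r [f [Qf_full Qf_basis]]] := exists_col_basis Q.
exists [set l in codom f]; set S := [set l in codom f].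
apply/negP => /det0P [v v_neq0 vM0].
have vM_E l : (v *m col_mix S P Q) 0 l = if l \in S then (v *m Q) 0 l else (v *m P) 0 l.
  by rewrite !mxE; case: ifP => lS; apply: eq_bigr => i _; rewrite mxE lS.
have vQ0 : v *m Q = 0.
  apply: Qf_basis; apply/rowP => j; rewrite mulmx_colsub [LHS]mxE [RHS]mxE.
  by have := vM_E (f j); rewrite vM0 inE codom_f mxE => <-.
have vP_off l : l \notin codom f -> (v *m P) 0 l = 0.
  by move=> l_off; have := vM_E l; rewrite vM0 inE (negPf l_off) mxE.
have vP0 : v *m P = 0.
  apply: (row_eq0_on_col_basis Qf_full) => //.
  by rewrite -mulmxA PQ_sym mulmxA vQ0 mul0mx.
case/negP: v_neq0; apply/eqP/(row_free_inj PQ_free).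
by rewrite mul0mx mul_mx_row vQ0 vP0 row_mx0.
Qed.

End ColumnBasis.

Section CoordinateLagrangian.
Variable n : nat.
Local Notation bar := (@barpos n).

Lemma rshift_or_bar (k : 'I_(n + n)) :
  (exists m, k = rshift n m) \/ (exists m, k = bar (rshift n m)).
Proof.
case: (split_ordP k) => i ->; last by left; exists i.
by right; exists (rev_ord i); apply: val_inj => /=; have := ltn_ord i; lia.
Qed.

Lemma rshift_neq_bar (m m' : 'I_n) : rshift n m != bar (rshift n m').
Proof. by apply/eqP => /(congr1 val) /=; have := ltn_ord m'; lia. Qed.

(* [rshift n m] is the position of e_(m+1) and [bar (rshift n m)] that of
   e_(m+1)bar, so [coord_lagrangian S] indexes the coordinate Lagrangian
   spanned by the e_i, i in S, and the e_ibar, i not in S. *)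
Definition lagr_pos (S : {set 'I_n}) (m : 'I_n) : 'I_(n + n) :=
  if m \in S then rshift n m else bar (rshift n m).

Definition coord_lagrangian (S : {set 'I_n}) : {set 'I_(n + n)} :=
  [set lagr_pos S m | m : 'I_n].

Lemma lagr_pos_inj S : injective (lagr_pos S).
Proof.
move=> m1 m2; rewrite /lagr_pos.
case: (m1 \in S); case: (m2 \in S) => eq12.
- exact: rshift_inj eq12.
- by move/eqP: eq12; rewrite (negPf (rshift_neq_bar _ _)).
- by move/esym/eqP: eq12; rewrite (negPf (rshift_neq_bar _ _)).
- exact/rshift_inj/barpos_inj.
Qed.

Lemma mem_coord_lagrangian_rshift S m :
  (rshift n m \in coord_lagrangian S) = (m \in S).
Proof.
apply/imsetP/idP => [[m' _]|mS]; last by exists m; rewrite /lagr_pos ?mS.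
rewrite /lagr_pos; case: ifP => m'S eq_m; first by rewrite (rshift_inj eq_m).
by move/eqP: eq_m; rewrite (negPf (rshift_neq_bar _ _)).
Qed.

Lemma mem_coord_lagrangian_bar S m :
  (bar (rshift n m) \in coord_lagrangian S) = (m \notin S).
Proof.
apply/imsetP/idP => [[m' _]|mS]; last by exists m; rewrite /lagr_pos ?(negPf mS).
rewrite /lagr_pos; case: ifP => m'S eq_m.
  by move/esym/eqP: eq_m; rewrite (negPf (rshift_neq_bar _ _)).
by rewrite (rshift_inj (barpos_inj eq_m)) m'S.
Qed.

Lemma card_coord_lagrangian S : #|coord_lagrangian S| = n.
Proof. by rewrite card_imset ?card_ord //; exact: lagr_pos_inj. Qed.

Lemma ltrans_coord_lagrangian S : ltrans (coord_lagrangian S) = coord_lagrangian S.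
Proof.
apply/setP => k; rewrite /ltrans inE -{1}[k]barposK (mem_imset _ _ barpos_inj).
case: (rshift_or_bar k) => [[m ->]|[m ->]]; rewrite ?barposK.
  by rewrite mem_coord_lagrangian_bar mem_coord_lagrangian_rshift negbK.
by rewrite mem_coord_lagrangian_rshift mem_coord_lagrangian_bar.
Qed.

Variable F : fieldType.
Implicit Type A : 'M[F]_(n, n + n).

Local Notation neg_block A := (colsub (fun m => bar (rshift n m)) A).
Local Notation pos_block A := (colsub (@rshift n n) A).

Lemma det_col_mix_blocks A S :
  \det (col_mix S (neg_block A) (pos_block A)) =
    (-1) ^+ inversions ord_ltn (map (lagr_pos S) (enum 'I_n)) *
    pluecker A (coord_lagrangian S).
Proof.
set u := map (lagr_pos S) (enum 'I_n).
have sz_u : size u = n by rewrite size_map size_enum_ord.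
have u_uniq : uniq u by rewrite (map_inj_uniq (@lagr_pos_inj S)) enum_uniq.
have sort_u : sort ord_leq u = enum (coord_lagrangian S).
  apply: sort_ord_leqP; first exact/sorted_ltn_leq/sorted_enum_set.
  apply: uniq_perm => // [|k]; first exact: enum_uniq.
  by rewrite mem_enum; apply/mapP/imsetP => -[m _ ->]; exists m; rewrite ?mem_enum.
rewrite plueckerE -sort_u -(det_colsel_sort _ _ sz_u u_uniq); congr (\det _).
apply/matrixP => i j; rewrite !mxE (nth_map j) ?size_enum_ord // nth_ord_enum.
by rewrite /lagr_pos; case: (j \in S).
Qed.

Lemma row_free_blocks A : row_free A -> row_free (row_mx (neg_block A) (pos_block A)).
Proof.
move=> A_free; apply: inj_row_free => z.
rewrite mul_mx_row !mulmx_colsub -row_mx0 => /eq_row_mx [zP0 zQ0].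
apply: (row_free_inj A_free); rewrite mul0mx; apply/rowP => k; rewrite [RHS]mxE.
case: (rshift_or_bar k) => [[m ->]|[m ->]].
  by move/rowP/(_ m): zQ0; rewrite !mxE => ->.
by move/rowP/(_ m): zP0; rewrite !mxE => ->.
Qed.

Lemma isotropic_blocks A : (forall i j : 'I_n, Omega (row i A) (row j A) = 0) ->
  neg_block A *m (pos_block A)^T = pos_block A *m (neg_block A)^T.
Proof.
move=> A_iso; apply/matrixP => i j; have := A_iso i j.
rewrite /Omega big_split_ord /= big_pred0 => [|k]; last by rewrite leqNgt ltn_ord.
rewrite add0r (eq_bigl xpredT) => [|k]; last by rewrite leq_addr.
rewrite sumrB => /eqP; rewrite subr_eq0 => /eqP eq_sums.
by rewrite !mxE; move: eq_sums; congr (_ = _); apply: eq_bigr => k _; rewrite !mxE.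
Qed.

Lemma exists_selfdual_pluecker_neq0 A :
  \rank A = n -> (forall i j : 'I_n, Omega (row i A) (row j A) = 0) ->
  exists beta : {set 'I_(n + n)},
    [/\ #|beta| = n, ltrans beta = beta & pluecker A beta != 0].
Proof.
move=> rkA A_iso; have A_free : row_free A by rewrite /row_free rkA.
have [S detS] := exists_col_mix_unit (row_free_blocks A_free) (isotropic_blocks A_iso).
exists (coord_lagrangian S); split.
- exact: card_coord_lagrangian.
- exact: ltrans_coord_lagrangian.
by apply: contra detS => /eqP pA0; rewrite det_col_mix_blocks pA0 mulr0.
Qed.

End CoordinateLagrangian.

Lemma pluecker_lagrangian (F : fieldType) n (A : 'M[F]_(n, n + n)) :
  \rank A = n -> (forall i j : 'I_n, Omega (row i A) (row j A) = 0) ->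
  forall alpha : {set 'I_(n + n)}, #|alpha| = n ->
    pluecker A alpha - (lsign alpha)%:~R * pluecker A (ltrans alpha) = 0.
Proof.
move=> rkA A_iso alpha card_alpha.
have [c _ pA] := pluecker_perp rkA rkA A_iso.
have [beta [card_beta beta_sd pA_beta]] := exists_selfdual_pluecker_neq0 rkA A_iso.
have c1 : c = 1.
  apply: (mulIf pA_beta); have := pA beta card_beta.
  by rewrite beta_sd lsign_selfdual // mulr1 mul1r => <-.
by rewrite (pA alpha card_alpha) c1 mul1r subrr.
Qed.

Theorem proposition2p7 (R : realType) (n : nat) :
  (forall (A B : 'M[R[i]]_(n, n + n)),
      \rank A = n -> \rank B = n ->
      (forall (i j : 'I_n), Omega (row i B) (row j A) = 0) ->
      exists2 c : R[i], c != 0 &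
        forall alpha : {set 'I_(n + n)}, #|alpha| = n ->
          pluecker B alpha = c * (lsign alpha)%:~R * pluecker A (ltrans alpha))
  /\
  (forall A : 'M[R[i]]_(n, n + n),
      \rank A = n ->
      (forall (i j : 'I_n), Omega (row i A) (row j A) = 0) ->
      forall alpha : {set 'I_(n + n)}, #|alpha| = n ->
        pluecker A alpha - (lsign alpha)%:~R * pluecker A (ltrans alpha) = 0).
Proof.
split=> [A B rkA rkB | A rkA]; first exact: pluecker_perp.
exact: pluecker_lagrangian.
Qed.
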